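(* Suppose $u$ and $v$ are vertices of $G$ such that $u$ is an ancestor or a descendant of $v$ in $T$. Then, when routing from $u$ to $v$, the routing algorithm reaches $v$ after traversing $O(\log n)$ edges.
   Context: Let $T$ be a rooted tree on $n$ vertices with positive edge weights; $\delta_T(a,b)$ is the weight of the path in $T$ from $a$ to $b$. Ancestor/descendant refer to $T$, and a vertex counts as its own ancestor and descendant; ''deepest''/''highest'' refer to depth in $T$. $T_v$ is the subtree of $T$ rooted at $v$. For every non-leaf vertex $v$ fix a child $c_1(v)$ with $|T_{c_1(v)}|$ maximal; edges $(v,c_1(v))$ are leftmost. A subtree $R$ of $T$ is rooted at its vertex closest to the root, $rt(R)$, and inherits the leftmost labelling; $R_v$ is the subtree of $R$ rooted at $v$. $P_R(v)$ is the longest downward path from $v$ in $R$ using only leftmost edges, with last vertex $l(v)$; $l(R):=l(rt(R))$. A vertex $v$ of $R$ is $d$-balanced if $|R_{c_1(v)}|\le |R|-d$ (with $|R_{c_1(v)}|=0$ if $c_1(v)$ is undefined or not in $R$); $b_d(v)$ is the first $d$-balanced vertex on $P_R(v)$, or NULL. $CV(R,d)=\emptyset$ if $b_d(rt(R))$ is NULL, else $\{b\}\cup\bigcup_w CV(R_w,d)$ with $b=b_d(rt(R))$ and $w$ ranging over children of $b$ in $R$. Fix an integer $k\ge4$; for a subtree $R$ with $m$ vertices, $C_R=V(R)$ if $k\ge m/2-1$, else $C_R=CV(R,m/k)\cup\{l(R),rt(R)\}$. Canonical subtrees: $T$ is canonical; if $R$ is canonical, each component of $R$ minus $C_R$ is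 canonical. Each vertex $v$ lies in $C_R$ for exactly one canonical $R$, denoted $T^v$. The spanner $G$ has vertex set $V(T)$ and edges: all edges of $T$, and all pairs of distinct vertices of $C_R$ for every canonical $R$; edge $(a,b)$ has weight $\delta_T(a,b)$. Routing algorithm from current vertex $u$ to destination $v$, repeated until $v$ is reached: Case 0: if $v$ is adjacent to $u$, move to $v$. Case 1: $u$ is an ancestor of $v$; let $X$ be the vertices of $C_{T^u}$ that are ancestors of $v$, $x$ the deepest; move to $x$, then to the child of $x$ that is an ancestor of $v$. Case 2: $u$ is a descendant of $v$; let $X$ be the vertices of $C_{T^u}$ that are descendants of $v$ and ancestors of $u$, $x$ the highest; move to $x$, then to the parent of $x$. Case 3: $u$ is neither; let $X$ be the vertices of $C_{T^u}$ that are ancestors of $v$ but not of $u$, and $Y$ those that are ancestors of $u$ but not of $v$, $y$ the highest vertex of $Y$. Case 3 a): $X=\emptyset$: move to $y$, then to the parent of $y$. Case 3 b): $X\neq\emptyset$: with $x$ the deepest vertex of $X$ and $x'$ the child of $x$ that is an ancestor of $v$, move to $x$, then to $x'$. (Moving to the current vertex means staying.) *)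

From mathcomp Require Import all_boot all_algebra.
Set Implicit Arguments. Unset Strict Implicit. Unset Printing Implicit Defensive.
Import GRing.Theory Num.Theory.

Section Routing.
(* The tree T: vertex set V (n = #|V|), root r, parent map par (par r = r). *)
Variable V : finType.
Variable r : V.
Variable par : V -> V.
(* c1 v = Some (c_1(v)) for non-leaf v, None for leaves. *)
Variable c1 : V -> option V.
Variable k : nat.

Definition anc (a b : V) : bool := [exists i : 'I_(#|V|).+1, iter i par b == a].
Definition child (c x : V) : bool := (c != r) && (par c == x).
Definition adj (x y : V) : bool := child x y || child y x.
Definition depth (x : V) : nat := #|[set a | anc a x]|.-1.
Definition sub (v : V) : {set V} := [set x | anc v x].

Definition rt (R : {set V}) : V :=
  odflt r [pick x in R | [forall y in R, depth x <= depth y]].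
(* next vertex on P_R(x), if any *)
Definition nextP (R : {set V}) (x : V) : option V :=
  match c1 x with Some c => if c \in R then Some c else None | None => None end.
Fixpoint lastPf (f : nat) (R : {set V}) (x : V) : V :=
  match f with 0 => x | f'.+1 =>
    match nextP R x with Some y => lastPf f' R y | None => x end end.
Definition lastP (R : {set V}) (x : V) : V := lastPf #|V| R x.
Definition lR (R : {set V}) : V := lastP R (rt R).
(* |R_{c_1(v)}| (0 if undefined or not in R) *)
Definition sizeLeft (R : {set V}) (v : V) : nat :=
  match c1 v with Some c => if c \in R then #|R :&: sub c| else 0 | None => 0 end.
Definition balanced (R : {set V}) (d : rat) (v : V) : bool :=
  ((sizeLeft R v)%:R <= (#|R|)%:R - d)%R.
Fixpoint bfirstf (f : nat) (R : {set V}) (d : rat) (x : V) : option V :=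
  if x \notin R then None else
  if balanced R d x then Some x else
  match f with 0 => None | f'.+1 =>
    match nextP R x with Some y => bfirstf f' R d y | None => None end end.
Definition bfirst (R : {set V}) (d : rat) (x : V) : option V := bfirstf #|V| R d x.
Fixpoint CVf (f : nat) (R : {set V}) (d : rat) : {set V} :=
  match f with 0 => set0 | f'.+1 =>
    match bfirst R d (rt R) with
    | None => set0
    | Some b => b |: \bigcup_(w | child w b && (w \in R)) CVf f' (R :&: sub w) d
    end end.
Definition CV (R : {set V}) (d : rat) : {set V} := CVf #|V|.+1 R d.
Definition CR (R : {set V}) : {set V} :=
  let m := #|R| in
  if ((m%:R / 2%:R - 1 : rat) <= k%:R)%R then R
  else CV R (m%:R / k%:R) :|: [set lR R; rt R].

Definition compo (X : {set V}) (x : V) : {set V} :=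
  [set y | (x \in X) && connect (fun a b => (b \in X) && adj a b) x y].
Definition canstep (R S : {set V}) : bool :=
  [exists x, (x \in R :\: CR R) && (S == compo (R :\: CR R) x)].
(* canonical subtrees: T, and recursively components of R minus C_R *)
Definition canonical (S : {set V}) : bool := connect canstep setT S.
Definition Tu (u : V) : option {set V} := [pick R | canonical R & u \in CR R].
Definition Cu (u : V) : {set V} :=
  match Tu u with Some R => CR R | None => set0 end.

Definition adjG (a b : V) : bool :=
  adj a b || ((a != b) && [exists R, canonical R && (a \in CR R) && (b \in CR R)]).

Definition deepest (X : {set V}) : option V :=
  [pick x in X | [forall y in X, depth y <= depth x]].
Definition highest (X : {set V}) : option V :=
  [pick x in X | [forall y in X, depth x <= depth y]].
Definition childTo (x v : V) : option V := [pick c | child c x && anc c v].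
Definition moveTo (u x : V) : seq V := if x == u then [::] else [:: x].

(* one iteration of the routing algorithm from u to v: list of the vertices
   reached, one per traversed edge *)
Definition step (u v : V) : seq V :=
  if u == v then [::] else
  if adjG u v then [:: v] else
  let C := Cu u in
  if anc u v then
    match deepest [set x in C | anc x v] with
    | Some x => match childTo x v with
                | Some x' => moveTo u x ++ [:: x'] | None => [::] end
    | None => [::] end
  else if anc v u then
    match highest [set x in C | anc v x && anc x u] with
    | Some x => moveTo u x ++ [:: par x]
    | None => [::] end
  else
    let X := [set x in C | anc x v && ~~ anc x u] in
    let Y := [set x in C | anc x u && ~~ anc x v] in
    if X == set0 then
      match highest Y with
      | Some y => moveTo u y ++ [:: par y] | None => [::] end
    else
      match deepest X with
      | Some x => match childTo x v with
                  | Some x' => moveTo u x ++ [:: x'] | None => [::] end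
      | None => [::] end.

Fixpoint walk (t : nat) (u v : V) : seq V :=
  match t with 0 => [::] | t'.+1 =>
    let s := step u v in s ++ walk t' (last u s) v end.

Definition rooted_tree : Prop :=
  par r = r /\ forall x, exists i, iter i par x = r.
Definition leftmost_spec : Prop :=
  forall v, (c1 v = None <-> forall w, ~~ child w v) /\
    forall c, c1 v = Some c ->
      child c v /\ forall w, child w v -> #|sub w| <= #|sub c|.
End Routing.

(* Each iteration of the routing algorithm traverses at most two edges and
   moves from C_R to C_Q for canonical subtrees R and Q, landing again on an
   ancestor or a descendant of v.  While v lies outside R, the walk leaves R
   through an edge; the upward exit of R is at rt(R), and the only downward
   exit is at l(R), because inside Q every edge leading from outside C_Q down
   towards a vertex of C_Q is leftmost.  Either way the walk lands
   in C_Q for the parent Q of R, and |Q| > k|R|.  Once v lies in R, the walk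
   enters the component Q of R minus C_R containing v, and k|Q| < |R| since
   the balanced vertices of CV(R, |R|/k) cut R into pieces of fewer than |R|/k
   vertices.  As k >= 4, each of the two phases lasts at most log_4 n + 1
   iterations. *)

From Pilot Require Import Defs.
From mathcomp Require Import all_boot all_order all_algebra.
From mathcomp Require Import zify lra.
Set Implicit Arguments. Unset Strict Implicit. Unset Printing Implicit Defensive.
Import Order.TTheory GRing.Theory Num.Theory.

Section Tree.
Variables (V : finType) (r : V) (par : V -> V).
Hypothesis tree_par : rooted_tree r par.

Local Notation anc := (anc par).
Local Notation child := (child r par).
Local Notation depth := (depth par).
Local Notation adj := (adj r par).
Implicit Types (R S Q X : {set V}).

Lemma ancE a b : anc a b = fconnect par b a.
Proof.
apply/existsP/idP => [[i /eqP <-]|conn]; first exact: fconnect_iter.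
have lt_index : findex par b a < #|V|.+1.
  by rewrite ltnS ltnW // (leq_trans (findex_max conn)) ?max_card.
by exists (Ordinal lt_index); rewrite /= iter_findex.
Qed.

Lemma ancP a b : reflect (exists i, iter i par b = a) (anc a b).
Proof.
rewrite ancE; apply: (iffP idP) => [conn|[i <-]]; last exact: fconnect_iter.
by exists (findex par b a); rewrite iter_findex.
Qed.

Lemma anc_refl a : anc a a.
Proof. by rewrite ancE connect0. Qed.

Lemma anc_trans a b c : anc a b -> anc b c -> anc a c.
Proof. by rewrite !ancE => ab bc; apply: connect_trans bc ab. Qed.

Lemma anc_par x : anc (par x) x.
Proof. by rewrite ancE fconnect1. Qed.

Lemma anc_eqVpar a c : anc a c = (c == a) || anc a (par c).
Proof. by rewrite !ancE fconnect_eqVf. Qed.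

Lemma anc_of_par a c : anc a (par c) -> anc a c.
Proof. by move=> a_pc; rewrite anc_eqVpar a_pc orbT. Qed.

Lemma iter_par_root i : iter i par r = r.
Proof. by case: tree_par => par_r _; elim: i => //= i ->. Qed.

Lemma anc_root x : anc r x.
Proof. by case: tree_par => _ /(_ x) [i iter_x]; apply/ancP; exists i. Qed.

Lemma par_neq x : x != r -> par x != x.
Proof.
move=> x_nr; apply: contra x_nr => /eqP par_x.
case: tree_par => _ /(_ x) [i]; suff -> : iter i par x = x by move->.
by elim: i => //= i ->.
Qed.

Lemma anc_antisym a b : anc a b -> anc b a -> a = b.
Proof.
move=> /ancP [i iter_i] /ancP [j iter_j].
have [ij0|ij_gt0] := posnP (i + j).
  by rewrite -iter_i (_ : i = 0) //; lia.
(* b lies on a cycle of par, and the only cycle is the loop at the root *)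
have periodic m : iter (m * (i + j)) par b = b.
  by elim: m => //= m IH; rewrite mulSn iterD IH addnC iterD iter_i iter_j.
have b_root : b = r.
  case: tree_par => _ /(_ b) [m iter_m].
  rewrite -(periodic m) (_ : m * (i + j) = (m * (i + j) - m) + m); last by nia.
  by rewrite iterD iter_m iter_par_root.
by rewrite -iter_i b_root iter_par_root.
Qed.

Lemma anc_total a b x : anc a x -> anc b x -> anc a b \/ anc b a.
Proof.
move=> /ancP [i <-] /ancP [j <-].
have [le_ij|lt_ji] := leqP i j.
  by right; apply/ancP; exists (j - i); rewrite -iterD subnK.
by left; apply/ancP; exists (i - j); rewrite -iterD subnK // ltnW.
Qed.

Lemma anc_neq_par x c : anc x c -> x != c -> c != r /\ anc x (par c).
Proof.
rewrite anc_eqVpar eq_sym => /orP [-> //|x_pc] x_nc; split=> //.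
apply: contra x_nc => /eqP c_r.
by rewrite (anc_antisym (anc_of_par x_pc) _) // c_r anc_root.
Qed.

Lemma depth_lt a b : anc a b -> a != b -> depth a < depth b.
Proof.
move=> ab a_nb; rewrite /depth.
have proper_ancs : [set x | anc x a] \proper [set x | anc x b].
  apply/properP; split.
    by apply/subsetP => x; rewrite !inE => /anc_trans; apply.
  exists b; rewrite !inE ?anc_refl //.
  by apply: contra a_nb => ba; rewrite (anc_antisym ab ba).
have := proper_card proper_ancs.
have : 0 < #|[set x | anc x a]| by apply/card_gt0P; exists a; rewrite inE anc_refl.
lia.
Qed.

Lemma depth_le a b : anc a b -> depth a <= depth b.
Proof. by move=> ab; have [->|/(depth_lt ab)/ltnW] := eqVneq a b. Qed.

Lemma depth_lt_card x : depth x < #|V|.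
Proof.
rewrite /depth; have := max_card [set a | anc a x].
have : 0 < #|[set a | anc a x]| by apply/card_gt0P; exists x; rewrite inE anc_refl.
lia.
Qed.

Lemma anc_depth_eq a b : anc a b -> depth b <= depth a -> a = b.
Proof. by move=> ab; apply: contraTeq; rewrite -ltnNge; apply: depth_lt. Qed.

Lemma child_par_eq c x : child c x -> par c = x /\ c != r.
Proof. by case/andP => c_nr /eqP. Qed.

Lemma child_par x : x != r -> child x (par x).
Proof. by move=> x_nr; rewrite /Defs.child x_nr eqxx. Qed.

Lemma child_anc c x : child c x -> anc x c /\ x != c.
Proof.
case/child_par_eq => <- c_nr; split; first exact: anc_par.
exact: par_neq.
Qed.

Lemma child_depth c x : child c x -> depth x < depth c.
Proof. by case/child_anc; apply: depth_lt. Qed.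

Lemma anc_child a c x : child c x -> anc a c -> a = c \/ anc a x.
Proof.
by case/child_par_eq => <- _; rewrite anc_eqVpar eq_sym => /orP [/eqP|]; [left|right].
Qed.

Lemma exists_child_anc x v : anc x v -> x != v -> exists c, child c x /\ anc c v.
Proof.
elim/(@ltn_ind): {v}(depth v) {-2}v (erefl (depth v)) => N IH v depth_v xv x_nv.
have [v_nr x_pv] := anc_neq_par xv x_nv.
have [x_pv'|x_npv] := eqVneq x (par v).
  by exists v; split; [rewrite x_pv' child_par | apply: anc_refl].
have depth_pv : depth (par v) < N by rewrite -depth_v child_depth ?child_par.
have [c [cx c_pv]] := IH _ depth_pv (par v) erefl x_pv x_npv.
by exists c; split => //; apply: anc_of_par.
Qed.

Lemma child_uniq x c c' v : child c x -> child c' x -> anc c v -> anc c' v -> c = c'.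
Proof.
move=> cx c'x cv c'v.
wlog cc' : c c' cx c'x cv c'v / anc c c'.
  by move=> W; have [|] := anc_total cv c'v; [apply: W | move/W=> ->].
have [//|c_x] := anc_child c'x cc'.
have [x_c x_nc] := child_anc cx.
by rewrite (anc_antisym x_c c_x) eqxx in x_nc.
Qed.

Definition subtree S t :=
  [/\ t \in S, {in S, forall s, anc t s} & {in S, forall s, s != t -> par s \in S}].

Lemma subtree_between S t s a : subtree S t -> s \in S -> anc t a -> anc a s -> a \in S.
Proof.
case=> _ S_anc S_par.
elim/(@ltn_ind): {s}(depth s) {-2}s (erefl (depth s)) => N IH s depth_s sS ta a_s.
have [-> //|a_ns] := eqVneq a s.
have [s_nr a_ps] := anc_neq_par a_s a_ns.
have s_nt : s != t by apply: contra a_ns => /eqP st; rewrite (anc_antisym a_s) // st.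
apply: (IH (depth (par s))) => //; last exact: S_par.
by rewrite -depth_s child_depth ?child_par.
Qed.

Lemma subtree_rt S t : subtree S t -> rt r par S = t.
Proof.
case=> tS S_anc _; rewrite /rt; case: pickP => [x /andP [xS /forallP x_min]|].
  by apply/esym/anc_depth_eq; [apply: S_anc | have := x_min t; rewrite tS].
move/(_ t); rewrite tS /= => /negbT/negP; case; apply/forallP => y.
by apply/implyP => yS; apply/depth_le/S_anc.
Qed.

Lemma subtree_sub S t w : subtree S t -> w \in S -> subtree (S :&: sub par w) w.
Proof.
case=> tS S_anc S_par wS; split.
- by rewrite !inE wS anc_refl.
- by move=> s; rewrite !inE => /andP [].
move=> s; rewrite !inE eq_sym => /andP [sS ws] w_ns.
have [s_nr w_ps] := anc_neq_par ws w_ns.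
rewrite w_ps andbT; apply: S_par => //.
by apply: contra w_ns => /eqP st; rewrite (anc_antisym ws) // st S_anc.
Qed.

Definition path_in X t x := [forall a, anc t a && anc a x ==> (a \in X)].
Definition top X x := [arg min_(t < x | anc t x && path_in X t x) depth t].

Lemma top_spec X x : x \in X ->
  [/\ anc (top X x) x, (forall a, anc (top X x) a -> anc a x -> a \in X)
    & top X x = r \/ par (top X x) \notin X].
Proof.
move=> xX.
have path_x : anc x x && path_in X x x.
  rewrite anc_refl; apply/forallP => a; apply/implyP => /andP [xa ax].
  by rewrite -(anc_antisym xa ax).
rewrite /top; case: arg_minnP => // t /andP [tx /forallP path_t] t_min.
split=> [//| a ta ax | ].
  by have := path_t a; rewrite ta ax.
have [-> | t_nr] := eqVneq t r; [by left | right].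
apply/negP => ptX.
have path_pt : anc (par t) x && path_in X (par t) x.
  rewrite (anc_trans (anc_par t) tx); apply/forallP => a; apply/implyP => /andP [pta ax].
  have [ta|a_t] := anc_total tx ax; first by have := path_t a; rewrite ta ax.
  move: a_t; rewrite anc_eqVpar => /orP [/eqP <- | apt].
    by have := path_t t; rewrite anc_refl tx.
  by rewrite -(anc_antisym pta apt).
have := t_min _ path_pt; have := child_depth (child_par t_nr); lia.
Qed.

Lemma top_unique X x t : x \in X -> anc t x -> (forall a, anc t a -> anc a x -> a \in X) ->
  t = r \/ par t \notin X -> top X x = t.
Proof.
move=> xX tx path_t top_t; have [] := top_spec xX.
move: (top X x) => u ux path_u top_u.
wlog tu : t u tx path_t top_t ux path_u top_u / anc t u.
  by move=> W; have [|] := anc_total tx ux; [apply: W | move/W => ->].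
have [-> //|t_nu] := eqVneq t u.
have [u_nr t_pu] := anc_neq_par tu t_nu.
case: top_u => [u_r|]; first by rewrite u_r eqxx in u_nr.
by rewrite (path_t _ t_pu (anc_trans (anc_par u) ux)).
Qed.

Lemma top_child X a b : a \in X -> b \in X -> child b a -> top X b = top X a.
Proof.
move=> aX bX ba; have [top_a path_a top_top_a] := top_spec aX.
apply: top_unique => //; first by apply: anc_trans top_a _; case: (child_par_eq ba) => <- _; apply: anc_par.
by move=> y y_top yb; have [-> //|] := anc_child ba yb; apply: path_a.
Qed.

Definition edge_in X := [rel a b | (b \in X) && adj a b].

Lemma connect_up X z a : anc a z -> (forall b, anc a b -> anc b z -> b \in X) ->
  connect (edge_in X) z a.
Proof.
elim/(@ltn_ind): {z}(depth z) {-2}z (erefl (depth z)) => N IH z depth_z az path_a.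
have [-> | a_nz] := eqVneq a z; first exact: connect0.
have [z_nr a_pz] := anc_neq_par az a_nz.
apply: connect_trans (connect1 _) (IH _ _ _ erefl a_pz _).
- by rewrite /= path_a ?anc_par // /Defs.adj child_par.
- by rewrite -depth_z child_depth ?child_par.
- by move=> b ab /anc_of_par; apply: path_a.
Qed.

Lemma connect_down X a y : anc a y -> (forall b, anc a b -> anc b y -> b \in X) ->
  connect (edge_in X) a y.
Proof.
elim/(@ltn_ind): {y}(depth y) {-2}y (erefl (depth y)) => N IH y depth_y ay path_a.
have [-> | a_ny] := eqVneq a y; first exact: connect0.
have [y_nr a_py] := anc_neq_par ay a_ny.
apply: connect_trans (IH _ _ _ erefl a_py _) (connect1 _).
- by rewrite -depth_y child_depth ?child_par.
- by move=> b ab /anc_of_par; apply: path_a.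
- by rewrite /= path_a ?anc_refl // /Defs.adj child_par ?orbT.
Qed.

Local Notation compo := (compo r par).

Lemma compoE X x y : (y \in compo X x) = [&& x \in X, y \in X & top X y == top X x].
Proof.
rewrite /compo inE; case xX: (x \in X) => //=.
apply/idP/idP.
  case/connectP => p; elim: p x xX => [|z p IH] x xX /=; first by move=> _ ->; rewrite xX eqxx.
  case/andP => /andP [zX /orP xz] path_z /(IH z zX path_z) /andP [-> /eqP ->].
  by case: xz => [/(top_child zX xX) | /(top_child xX zX)] ->; rewrite eqxx.
case/andP => yX /eqP top_yx.
have [top_x path_x _] := top_spec xX; have [top_y path_y _] := top_spec yX.
apply: connect_trans (connect_up top_x path_x) _.
by rewrite -top_yx; apply: connect_down.
Qed.

Lemma compo_sub X x : compo X x \subset X.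
Proof. by apply/subsetP => y; rewrite compoE => /and3P []. Qed.

Lemma compo_self X x : x \in X -> x \in compo X x.
Proof. by move=> xX; rewrite compoE xX eqxx. Qed.

Lemma compo_same X x y : y \in compo X x -> compo X y = compo X x.
Proof.
rewrite compoE => /and3P [xX yX /eqP top_yx]; apply/setP => z.
by rewrite !compoE xX yX top_yx.
Qed.

Lemma compo_adj X x y z : y \in compo X x -> z \in X -> adj y z -> z \in compo X x.
Proof.
rewrite !compoE => /and3P [xX yX /eqP <-] zX /orP yz; rewrite xX zX /=.
by case: yz => [/(top_child zX yX) | /(top_child yX zX)] ->.
Qed.

Lemma compo_down X x y : x \in X -> anc x y -> (forall b, anc x b -> anc b y -> b \in X) ->
  y \in compo X x.
Proof. by move=> xX xy path_x; rewrite /Defs.compo inE xX connect_down. Qed.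

Lemma compo_up X x a : x \in X -> anc a x -> (forall b, anc a b -> anc b x -> b \in X) ->
  a \in compo X x.
Proof. by move=> xX ax path_a; rewrite /Defs.compo inE xX connect_up. Qed.

Lemma compo_subtree X x : x \in X -> subtree (compo X x) (top X x).
Proof.
move=> xX; have [top_x path_x top_top] := top_spec xX.
have topX : top X x \in X by apply: path_x; rewrite ?anc_refl.
have top_idem : top X (top X x) = top X x.
  apply: top_unique; rewrite ?anc_refl //.
  by move=> a ta a_t; rewrite (anc_antisym a_t ta).
split.
- by rewrite compoE xX topX top_idem eqxx.
- by move=> s; rewrite compoE => /and3P [_ sX /eqP <-]; case: (top_spec sX).
move=> s; rewrite compoE => /and3P [_ sX /eqP top_sx]; rewrite eq_sym => top_ns.
have [] := top_spec sX; rewrite top_sx => top_s path_s _.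
have [s_nr top_ps] := anc_neq_par top_s top_ns.
have psX : par s \in X by apply: path_s; rewrite ?anc_par.
by rewrite compoE xX psX -top_sx (top_child psX sX) ?child_par ?eqxx.
Qed.

Variable c1 : V -> option V.
Hypothesis c1_child : forall v c, c1 v = Some c -> child c v.

Local Notation nextP := (nextP c1).
Local Notation sizeLeft := (sizeLeft par c1).
Local Notation balanced := (balanced par c1).
Local Notation bfirstf := (bfirstf par c1).
Local Notation CVf := (CVf r par c1).

Lemma nextP_Some R x y : nextP R x = Some y -> [/\ c1 x = Some y, y \in R & child y x].
Proof.
rewrite /Defs.nextP; case c1x: (c1 x) => [c|] //; case: ifP => // cR [<-].
by split => //; apply: c1_child.
Qed.

Lemma sizeLeft_nextP_None R x : nextP R x = None -> sizeLeft R x = 0.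
Proof. by rewrite /Defs.nextP /Defs.sizeLeft; case: (c1 x) => // c; case: ifP. Qed.

Inductive leftpath R : V -> V -> Prop :=
| leftpath0 x : leftpath R x x
| leftpathS x y z : nextP R x = Some y -> leftpath R y z -> leftpath R x z.

Lemma leftpath_anc R x z : leftpath R x z -> anc x z.
Proof.
elim=> [y|w y z' /nextP_Some [_ _ /child_anc [wy _]] _ yz]; first exact: anc_refl.
exact: anc_trans wy yz.
Qed.

Lemma leftpath_mem R x z : leftpath R x z -> x \in R -> z \in R.
Proof. by elim=> // w y z' /nextP_Some [_ yR _] _ IH _; apply: IH. Qed.

Lemma leftpath_leftmost R x b a a' : leftpath R x b -> anc x a -> child a' a -> anc a' b ->
  c1 a = Some a' /\ a' \in R.
Proof.
move=> xb; elim: xb a a' => {x b} [y|x y b next_x yb IH] a a' xa a'a a'b.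
  have [ay a_na'] := child_anc a'a.
  by rewrite (anc_antisym ay (anc_trans a'b xa)) eqxx in a_na'.
have [c1x yR yx] := nextP_Some next_x.
have [x_a|x_na] := eqVneq x a.
  by rewrite -x_a in a'a *; rewrite (child_uniq a'a yx a'b (leftpath_anc yb)).
apply: IH => //.
have [c [cx ca]] := exists_child_anc xa x_na.
have cb : anc c b by apply: anc_trans ca (anc_trans (proj1 (child_anc a'a)) a'b).
by rewrite -(child_uniq cx yx cb (leftpath_anc yb)).
Qed.

Lemma leftmost_leftpath R x z : anc x z ->
  (forall a a', anc x a -> child a' a -> anc a' z -> c1 a = Some a' /\ a' \in R) ->
  leftpath R x z.
Proof.
elim/(@ltn_ind): {x}(#|V| - depth x) {-2}x (erefl (#|V| - depth x)) => N IH x height_x xz left.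
have [-> | x_nz] := eqVneq x z; first exact: leftpath0.
have [c [cx cz]] := exists_child_anc xz x_nz.
have [c1x cR] := left x c (anc_refl x) cx cz.
apply: (@leftpathS _ _ c); first by rewrite /Defs.nextP c1x cR.
apply: (IH (#|V| - depth c)) => //.
  by have := child_depth cx; have := depth_lt_card c; lia.
move=> a a' ca; apply: left; exact: anc_trans (proj1 (child_anc cx)) ca.
Qed.

Lemma leftpath_lastPf f R x : leftpath R x (lastPf c1 f R x).
Proof.
elim: f x => [|f IH] x /=; first exact: leftpath0.
case next_x: (nextP R x) => [y|]; last exact: leftpath0.
exact: leftpathS next_x (IH y).
Qed.

Lemma lastPf_end R x z f : leftpath R x z -> nextP R z = None ->
  depth z <= f + depth x -> lastPf c1 f R x = z.
Proof.
move=> xz; elim: xz f => {x z} [y|x y z next_x yz IH] f end_z.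
  by case: f => //= f; rewrite end_z.
have [_ _ yx] := nextP_Some next_x.
have := child_depth yx; have := depth_le (leftpath_anc yz).
by case: f => [|f] /=; [lia | rewrite next_x => ? ? ?; apply: IH => //; lia].
Qed.

Lemma bfirstf_Some f R d x b : bfirstf f R d x = Some b ->
  [/\ x \in R, leftpath R x b, balanced R d b &
     forall a, anc x a -> anc a b -> a != b -> ~~ balanced R d a].
Proof.
have found y : forall a, anc y a -> anc a y -> a != y -> ~~ balanced R d a.
  by move=> a ya ay; rewrite (anc_antisym ay ya) eqxx.
elim: f x => [|f IH] x /=; case: ifP => // /negbFE xR.
  by case: ifP => // bal [<-]; split => //; [exact: leftpath0 | exact: found].
case: ifP => [bal [<-]|unbal]; first by split => //; [exact: leftpath0 | exact: found].
case next_x: (nextP R x) => [y|] // /IH [yR yb bal left].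
have [_ _ yx] := nextP_Some next_x.
split => //; first exact: leftpathS next_x yb.
move=> a xa ab a_nb; have [<- | x_na] := eqVneq x a; first by rewrite unbal.
apply: left => //; have [c [cx ca]] := exists_child_anc xa x_na.
by rewrite -(child_uniq cx yx (anc_trans ca ab) (leftpath_anc yb)).
Qed.

Lemma unbalanced_end R d e : nextP R e = None -> ~~ balanced R d e -> (#|R|%:R < d)%R.
Proof. by move=> /sizeLeft_nextP_None; rewrite /Defs.balanced => -> /=; rewrite -ltNge; lra. Qed.

Lemma bfirstf_None_small f R d x : bfirstf f R d x = None -> x \in R ->
  #|V| <= f + depth x + 1 -> (#|R|%:R < d)%R.
Proof.
elim: f x => [|f IH] x /= + xR; rewrite xR /=; case: ifP => // /negbT unbal.
  move=> _ short; apply: unbalanced_end unbal.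
  case next_x: (nextP R x) => [y|] //; have [_ _ /child_depth yx] := nextP_Some next_x.
  by have := depth_lt_card y; set n := #|V| in short *; lia.
case next_x: (nextP R x) => [y|]; last by move=> _ _; apply: unbalanced_end unbal.
have [_ yR /child_depth yx] := nextP_Some next_x.
by move=> none_y short; apply: IH none_y yR _; set n := #|V| in short *; lia.
Qed.

Lemma bfirstf_Some_heavy f R d x b : bfirstf f R d x = Some b -> x != b ->
  (#|R|%:R - d < #|R :&: sub par b|%:R)%R.
Proof.
case/bfirstf_Some => xR xb _ left x_nb.
have [b_nr x_pb] := anc_neq_par (leftpath_anc xb) x_nb.
have := left _ x_pb (anc_par b) (par_neq b_nr).
have [c1pb _] := leftpath_leftmost xb x_pb (child_par b_nr) (anc_refl b).
by rewrite /Defs.balanced /Defs.sizeLeft c1pb (leftpath_mem xb xR) -ltNge.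
Qed.

Lemma CVfS f R d : CVf f.+1 R d =
  match bfirst par c1 R d (rt r par R) with
  | None => set0
  | Some b => b |: \bigcup_(w | child w b && (w \in R)) CVf f (R :&: sub par w) d
  end.
Proof. by []. Qed.

Lemma CVf_sub f R d : CVf f R d \subset R.
Proof.
elim: f R => [|f IH] R; first exact: sub0set.
rewrite CVfS; case bR: (bfirst par c1 R d (rt r par R)) => [b|]; last exact: sub0set.
have [rtR rt_b _ _] := bfirstf_Some bR.
rewrite subUset sub1set (leftpath_mem rt_b rtR) /=.
by apply/bigcupsP => w _; apply: subset_trans (IH _) (subsetIl _ _).
Qed.

Lemma mem_CVfS f R d b y : bfirst par c1 R d (rt r par R) = Some b ->
  y \in CVf f.+1 R d ->
  y = b \/ exists c, [/\ child c b, c \in R, anc c y & y \in CVf f (R :&: sub par c) d].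
Proof.
rewrite CVfS => -> /setU1P [->|/bigcupP [c /andP [cb cR] yc]]; [by left | right].
have := subsetP (CVf_sub _ _ _) _ yc; rewrite !inE => /andP [_ cy].
by exists c.
Qed.

Lemma CVfS_anc f R d b y : bfirst par c1 R d (rt r par R) = Some b ->
  y \in CVf f.+1 R d -> anc b y.
Proof.
move=> bR /(mem_CVfS bR) [-> | [c [cb _ cy _]]]; first exact: anc_refl.
exact: anc_trans (proj1 (child_anc cb)) cy.
Qed.

Lemma CVf_small f R w d S t : subtree R w -> #|R| < f -> subtree S t ->
  S \subset R :\: CVf f R d -> (#|S|%:R < d)%R.
Proof.
elim: f R w => [|f IH] R w // sub_R card_R sub_S S_out.
have [tS S_anc S_par] := sub_S; have [wR R_anc _] := sub_R.
have SR : S \subset R := subset_trans S_out (subsetDl _ _).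
have S_nCV s : s \in S -> s \notin CVf f.+1 R d.
  by move=> sS; have := subsetP S_out s sS; rewrite inE => /andP [].
move: S_nCV S_out; rewrite CVfS (subtree_rt sub_R).
case bR: (bfirst par c1 R d w) => [b|] S_nCV S_out; last first.
  have le_S : (#|S|%:R <= #|R|%:R :> rat)%R by rewrite ler_nat subset_leq_card.
  have := bfirstf_None_small bR wR (_ : _ <= _ + depth w + 1); rewrite -addnA leq_addr; lra.
have [_ wb _ _] := bfirstf_Some bR.
have b_nt : b != t by apply: contraNneq (S_nCV t tS) => <-; rewrite setU11.
have [bt|nbt] := boolP (anc b t).
  (* S lies in the subtree of a child c of b, on which CV recurses *)
  have [c [cb ct]] := exists_child_anc bt b_nt.
  have [bc b_nc] := child_anc cb.
  have cR : c \in R := subtree_between sub_R (subsetP SR t tS) (anc_trans (leftpath_anc wb) bc) ct.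
  apply: (IH _ c (subtree_sub sub_R cR) _ sub_S).
    apply: leq_trans (_ : #|R| <= f); last by rewrite -ltnS.
    apply/proper_card/properP; split; first exact: subsetIl.
    exists b; first exact: leftpath_mem wb wR.
    by rewrite !inE (leftpath_mem wb wR) /=; apply: contra b_nc => cb'; rewrite (anc_antisym bc cb').
  apply/subsetP => s sS; rewrite !inE (subsetP SR s sS) (anc_trans ct (S_anc s sS)) /= andbT.
  apply: contra (S_nCV s sS) => s_CV; rewrite setU1r //.
  by apply/bigcupP; exists c; rewrite ?cb ?cR.
(* S avoids T_b, which has more than |R| - d vertices because par b is unbalanced *)
have S_nb s : s \in S -> ~~ anc b s.
  move=> sS; apply/negP => bs; have [bt|tb] := anc_total bs (S_anc s sS).
    by rewrite bt in nbt.
  by have := S_nCV _ (subtree_between sub_S sS tb bs); rewrite setU11.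
have w_nb : w != b by apply: contraNneq nbt => <-; apply: R_anc (subsetP SR t tS).
have S_sub : S \subset R :\: sub par b.
  by apply/subsetP => s sS; rewrite !inE (subsetP SR s sS) S_nb.
have := subset_leq_card S_sub; rewrite cardsD.
have : #|R :&: sub par b| <= #|R| by rewrite subset_leq_card ?subsetIl.
have := bfirstf_Some_heavy bR w_nb.
move: #|S| #|R| #|R :&: sub par b| => nS nR nRb heavy le_nRb le_nS.
have : (nS%:R + nRb%:R <= nR%:R :> rat)%R by rewrite -natrD ler_nat; lia.
lra.
Qed.

Lemma CVf_leftmost f R w d a a' y : subtree R w -> a \in R -> a \notin CVf f R d ->
  child a' a -> y \in CVf f R d -> anc a' y -> c1 a = Some a'.
Proof.
elim: f R w => [|f IH] R w sub_R aR a_nCV a'a yCV a'y; first by rewrite inE in yCV.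
have [wR R_anc _] := sub_R; have [aa' a_na'] := child_anc a'a.
case bR: (bfirst par c1 R d (rt r par R)) => [b|]; last by move: yCV; rewrite CVfS bR inE.
have [_ wb _ _] := bfirstf_Some bR; rewrite (subtree_rt sub_R) in wb.
have b_na : b != a by apply: contraNneq a_nCV => <-; rewrite CVfS bR setU11.
have [ba|nba] := boolP (anc b a).
  have [c [cb ca]] := exists_child_anc ba b_na.
  have cR : c \in R := subtree_between sub_R aR (anc_trans (leftpath_anc wb) (proj1 (child_anc cb))) ca.
  case: (mem_CVfS bR yCV) => [y_b|[c' [c'b _ c'y yCV']]].
    by rewrite y_b in a'y; rewrite (anc_antisym aa' (anc_trans a'y ba)) eqxx in a_na'.
  rewrite (child_uniq c'b cb c'y (anc_trans ca (anc_trans aa' a'y))) in yCV'.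
  apply: (IH _ c (subtree_sub sub_R cR) _ _ a'a yCV' a'y); first by rewrite !inE aR.
  apply: contra a_nCV => aCV; rewrite CVfS bR setU1r //.
  by apply/bigcupP; exists c; rewrite ?cb ?cR.
have a'b : anc a' b.
  have [//|ba'] := anc_total a'y (CVfS_anc bR yCV).
  by have [<-|ba''] := anc_child a'a ba'; [exact: anc_refl | rewrite ba'' in nba].
by case: (leftpath_leftmost wb (R_anc a aR) a'a a'b).
Qed.

Variable k : nat.
Hypothesis k_gt0 : 0 < k.

Local Notation CR := (CR r par c1 k).
Local Notation lR := (lR r par c1).
Local Notation rt := (rt r par).

Lemma lR_mem R w : subtree R w -> lR R \in R.
Proof.
move=> sub_R; rewrite /Defs.lR (subtree_rt sub_R).
by case: sub_R => wR _ _; apply: leftpath_mem (leftpath_lastPf _ _ _) wR.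
Qed.

Lemma rt_CR R w : subtree R w -> w \in CR R.
Proof.
move=> sub_R; rewrite /Defs.CR; case: ifP => _; first by case: sub_R.
by rewrite !inE (subtree_rt sub_R) eqxx !orbT.
Qed.

Lemma lR_CR R w : subtree R w -> lR R \in CR R.
Proof.
move=> sub_R; rewrite /Defs.CR; case: ifP => _; first exact: lR_mem sub_R.
by rewrite !inE eqxx !orbT.
Qed.

Lemma CR_sub R w : subtree R w -> CR R \subset R.
Proof.
move=> sub_R; rewrite /Defs.CR; case: ifP => _; first exact: subxx.
rewrite subUset CVf_sub subUset !sub1set (lR_mem sub_R) (subtree_rt sub_R) /=.
by case: sub_R.
Qed.

Lemma card_compo_CR R w x : subtree R w -> x \in R :\: CR R ->
  k * #|compo (R :\: CR R) x| < #|R|.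
Proof.
move=> sub_R; rewrite /Defs.CR; case: ifP => _; first by rewrite setDv inE.
set CV := CV r par c1 R _ => xX; set K := compo _ x.
have K_out : K \subset R :\: CVf #|V|.+1 R (#|R|%:R / k%:R).
  apply: subset_trans (compo_sub _ _) _; apply/subsetP => y.
  by rewrite !inE negb_or => /andP [/andP [-> _] ->].
have := CVf_small sub_R (_ : #|R| < #|V|.+1) (compo_subtree xX) K_out.
rewrite ltr_pdivlMr ?ltr0n // -natrM ltr_nat mulnC; apply; by rewrite ltnS max_card.
Qed.

Lemma CR_leftmost R w a a' y : subtree R w -> a \in R :\: CR R -> child a' a -> a' \in R ->
  y \in CR R -> anc a' y -> c1 a = Some a'.
Proof.
move=> sub_R; rewrite /Defs.CR; case: ifP => _; first by rewrite setDv inE.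
rewrite !inE !negb_or => /andP [/and3P [a_nCV _ _] aR] a'a a'R.
have [_ R_anc _] := sub_R.
case/or3P => [yCV | /eqP-> | /eqP->] a'y; first exact: CVf_leftmost sub_R aR a_nCV a'a yCV a'y.
  have wl : leftpath R w (lR R) by rewrite /Defs.lR (subtree_rt sub_R); apply: leftpath_lastPf.
  by case: (leftpath_leftmost wl (R_anc a aR) a'a a'y).
rewrite (subtree_rt sub_R) in a'y.
have [aa' a_na'] := child_anc a'a.
have a'_w : a' = w := anc_antisym a'y (R_anc a' a'R).
by rewrite -a'_w in R_anc; rewrite (anc_antisym aa' (R_anc a aR)) eqxx in a_na'.
Qed.

Inductive canon : {set V} -> Prop :=
| canonT : canon setT
| canonS Q x : canon Q -> x \in Q :\: CR Q -> canon (compo (Q :\: CR Q) x).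

Lemma canon_subtree R : canon R -> subtree R (rt R).
Proof.
have sub_T : subtree setT r by split=> [|s _|s _ _]; rewrite ?inE ?anc_root.
case=> [|Q x _ xX]; first by rewrite (subtree_rt sub_T).
by have sub_R := compo_subtree xX; rewrite (subtree_rt sub_R).
Qed.

Lemma canonicalP R : canonical r par c1 k R <-> canon R.
Proof.
split.
  case/connectP => p + ->; elim/last_ind: p => [|p Q IH] /=; first by move=> _; apply: canonT.
  rewrite rcons_path last_rcons => /andP [/IH canon_p /existsP [x /andP [xX /eqP ->]]].
  exact: canonS canon_p xX.
elim=> [|Q x _ IH xX]; first exact: connect0.
by apply: connect_trans IH (connect1 _); apply/existsP; exists x; rewrite xX eqxx.
Qed.

Inductive desc : {set V} -> {set V} -> Prop :=
| desc0 R : desc R R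
| descS R x S : x \in R :\: CR R -> desc (compo (R :\: CR R) x) S -> desc R S.

Lemma desc_rcons R Q x : desc R Q -> x \in Q :\: CR Q -> desc R (compo (Q :\: CR Q) x).
Proof.
elim=> [R0 xX|R0 y S yX _ IH xX]; first exact: descS xX (desc0 _).
exact: descS yX (IH xX).
Qed.

Lemma canon_desc R : canon R -> desc setT R.
Proof. by elim=> [|Q x _ IH xX]; [apply: desc0 | apply: desc_rcons]. Qed.

Lemma desc_sub R S : desc R S -> S \subset R.
Proof.
elim=> [R0|R0 x S0 xX _ IH]; first exact: subxx.
by apply: subset_trans IH (subset_trans (compo_sub _ _) (subsetDl _ _)).
Qed.

Lemma desc_proper R S : desc R S -> S <> R -> S \subset R :\: CR R.
Proof. by case=> [R0 //|R0 x S0 xX SS0 _]; apply: subset_trans (desc_sub SS0) (compo_sub _ _). Qed.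

Lemma canon_laminar R S w : canon R -> canon S -> w \in R -> w \in S -> desc R S \/ desc S R.
Proof.
move=> canon_R canon_S; elim: canon_S R canon_R => [|Q x _ IH xX] R canon_R wR wS.
  by right; apply: canon_desc.
have wQ : w \in Q by move: (subsetP (compo_sub _ _) _ wS); rewrite inE => /andP [].
have [RQ|QR] := IH R canon_R wR wQ; first by left; apply: desc_rcons.
move: QR wR wS xX {IH}; case=> [R0|R0 y S0 yX S0R] wR wS xX.
  by left; apply: descS xX (desc0 _).
right; suff -> : compo (R0 :\: CR R0) x = compo (R0 :\: CR R0) y by [].
by rewrite -(compo_same wS) (compo_same (subsetP (desc_sub S0R) _ wR)).
Qed.

Lemma canon_CR_uniq R S w : canon R -> canon S -> w \in CR R -> w \in CR S -> R = S.
Proof.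
move=> canon_R canon_S wCR wCS.
have wR := subsetP (CR_sub (canon_subtree canon_R)) _ wCR.
have wS := subsetP (CR_sub (canon_subtree canon_S)) _ wCS.
have [RS|SR] := canon_laminar canon_R canon_S wR wS.
  apply/esym/eqP; apply: contraT => /eqP S_nR.
  by have := subsetP (desc_proper RS S_nR) _ wS; rewrite inE wCR.
apply/eqP; apply: contraT => /eqP R_nS.
by have := subsetP (desc_proper SR R_nS) _ wR; rewrite inE wCS.
Qed.

Lemma canon_CR_cover w : exists R, canon R /\ w \in CR R.
Proof.
suff : forall n R, #|R| <= n -> canon R -> w \in R -> exists R, canon R /\ w \in CR R.
  by apply; [apply: max_card | apply: canonT | rewrite inE].
elim=> [|n IH] R card_R canon_R wR.
  by move: card_R; rewrite leqn0 cards_eq0 => /eqP R0; rewrite R0 inE in wR.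
have [wCR|w_nCR] := boolP (w \in CR R); first by exists R.
have wX : w \in R :\: CR R by rewrite inE w_nCR.
apply: (IH (compo (R :\: CR R) w)); last exact: compo_self.
- by have := card_compo_CR (canon_subtree canon_R) wX; nia.
- exact: canonS canon_R wX.
Qed.

Lemma canon_parent R : canon R -> R <> setT ->
  exists Q x, [/\ canon Q, x \in Q :\: CR Q & R = compo (Q :\: CR Q) x].
Proof. by case=> [|Q x canon_Q xX] R_nT; [case: R_nT | exists Q, x]. Qed.

Lemma lR_exit R z y : canon R -> z \in R -> child y z -> y \notin R -> z = lR R.
Proof.
move=> canon_R; elim: canon_R z y => [|Q x canon_Q IH xX] z y; first by move=> _ _; rewrite inE.
set K := compo _ x => zK yz y_nK.
have sub_Q := canon_subtree canon_Q; have sub_K := compo_subtree xX.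
have K_out : K \subset Q :\: CR Q := compo_sub _ _.
have zX := subsetP K_out _ zK; have zQ : z \in Q by move: zX; rewrite inE => /andP [].
have [yQ|y_nQ] := boolP (y \in Q); last by move: zX; rewrite inE (IH z y zQ yz y_nQ) (lR_CR sub_Q).
have yCQ : y \in CR Q.
  apply: contraNT y_nK => y_nCQ; apply: compo_adj zK _ _; first by rewrite inE y_nCQ.
  by rewrite /Defs.adj yz orbT.
have zy : anc z y by case: (child_anc yz).
(* every edge from the root of K down to z is leftmost, as it lies above y \in CR Q *)
have rt_z : leftpath K (top (Q :\: CR Q) x) z.
  apply: leftmost_leftpath; first by case: sub_K => _ K_anc _; apply: K_anc.
  move=> a a' ta a'a a'z; have [aa' _] := child_anc a'a.
  have a'K : a' \in K by apply: subtree_between sub_K zK (anc_trans ta aa') a'z.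
  have aK : a \in K by apply: subtree_between sub_K zK ta (anc_trans aa' a'z).
  split=> //; apply: (CR_leftmost sub_Q (subsetP K_out _ aK) a'a _ yCQ (anc_trans a'z zy)).
  by move: (subsetP K_out _ a'K); rewrite inE => /andP [].
have z_end : nextP K z = None by rewrite /Defs.nextP (CR_leftmost sub_Q zX yz yQ yCQ (anc_refl y)) (negbTE y_nK).
rewrite /Defs.lR /Defs.lastP (subtree_rt sub_K); apply/esym/lastPf_end => //.
by have := depth_lt_card z; set n := #|V|; lia.
Qed.

Lemma canon_enter R y z : canon R -> y \in R :\: CR R -> z \in CR R -> adj y z ->
  y \in CR (compo (R :\: CR R) y).
Proof.
move=> canon_R yX zCR /orP [yz | zy].
  have [par_y _] := child_par_eq yz.
  have top_y : top (R :\: CR R) y = y.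
    apply: top_unique; rewrite ?anc_refl //; last by right; rewrite par_y inE zCR.
    by move=> a ya ay; rewrite -(anc_antisym ya ay).
  by have sub_K := compo_subtree yX; rewrite top_y in sub_K; apply: rt_CR sub_K.
have z_nK : z \notin compo (R :\: CR R) y.
  by apply: contraL zCR => /(subsetP (compo_sub _ _)); rewrite inE => /andP [].
have canon_K := canonS canon_R yX.
by rewrite {1}(lR_exit canon_K (compo_self yX) zy z_nK) (lR_CR (canon_subtree canon_K)).
Qed.

Lemma canon_exit R z y : canon R -> z \in R -> y \notin R -> adj z y ->
  exists2 Q, canon Q & y \in CR Q /\ k * #|R| < #|Q|.
Proof.
move=> canon_R zR y_nR zy.
have [|Q [x [canon_Q xX R_def]]] := canon_parent canon_R.
  by move=> R_T; rewrite R_T inE in y_nR.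
have sub_Q := canon_subtree canon_Q.
have zX : z \in Q :\: CR Q by move: zR; rewrite R_def; apply/subsetP/compo_sub.
have yQ : y \in Q.
  move: zX; rewrite inE => /andP [z_nCQ zQ].
  case/orP: zy => [/child_par_eq [<- z_nr] | yz].
    case: (sub_Q) => _ _; apply=> //; apply: contra z_nCQ => /eqP ->.
    exact: rt_CR sub_Q.
  apply: contraNT z_nCQ => y_nQ; rewrite (lR_exit canon_Q zQ yz y_nQ).
  exact: lR_CR sub_Q.
exists Q => //; split; last by rewrite R_def; apply: card_compo_CR sub_Q xX.
apply: contraNT y_nR => y_nCQ; rewrite R_def; apply: (compo_adj (y := z)) zy.
  by rewrite -R_def.
by rewrite inE y_nCQ.
Qed.

Local Notation adjG := (adjG r par c1 k).
Local Notation step := (step r par c1 k).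
Local Notation walk := (walk r par c1 k).

Lemma Cu_canon R w : canon R -> w \in CR R -> Cu r par c1 k w = CR R.
Proof.
move=> canon_R wCR; rewrite /Cu /Tu; case: pickP => [R' /andP [/canonicalP canon_R' wCR']|].
  by rewrite (canon_CR_uniq canon_R' canon_R wCR' wCR).
by move/(_ R); rewrite wCR andbT; move/canonicalP: canon_R => ->.
Qed.

Lemma adjG_CR R a b : canon R -> a \in CR R -> b \in CR R -> a != b -> adjG a b.
Proof.
move=> /canonicalP canon_R aCR bCR a_nb; rewrite /Defs.adjG a_nb /=.
by apply/orP; right; apply/existsP; exists R; rewrite canon_R aCR bCR.
Qed.

Lemma deepestP X x0 : x0 \in X ->
  exists x, [/\ deepest par X = Some x, x \in X & {in X, forall y, depth y <= depth x}].
Proof.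
move=> x0X; rewrite /deepest; case: pickP => [x /andP [xX /forallP x_max]|none].
  by exists x; split => // y yX; have := x_max y; rewrite yX.
have [m mX m_max] := @arg_maxnP _ x0 (mem X) depth x0X.
move: (none m); rewrite (mX : m \in X) /= => /negbT/negP; case.
by apply/forallP => y; apply/implyP => yX; apply: m_max.
Qed.

Lemma highestP X x0 : x0 \in X ->
  exists x, [/\ highest par X = Some x, x \in X & {in X, forall y, depth x <= depth y}].
Proof.
move=> x0X; rewrite /highest; case: pickP => [x /andP [xX /forallP x_min]|none].
  by exists x; split => // y yX; have := x_min y; rewrite yX.
have [m mX m_min] := @arg_minnP _ x0 (mem X) depth x0X.
move: (none m); rewrite (mX : m \in X) /= => /negbT/negP; case.
by apply/forallP => y; apply/implyP => yX; apply: m_min.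
Qed.

Lemma childToP x v : anc x v -> x != v ->
  exists c, [/\ childTo r par x v = Some c, child c x & anc c v].
Proof.
move=> xv x_nv; rewrite /childTo; case: pickP => [c /andP [cx cv]|none]; first by exists c.
by have [c [cx cv]] := exists_child_anc xv x_nv; move: (none c); rewrite cx cv.
Qed.

Variable v : V.

Lemma step_anc R w : canon R -> w \in CR R -> anc w v -> w != v -> ~~ adjG w v ->
  exists x x', [/\ step w v = moveTo w x ++ [:: x'], x \in CR R, child x' x, anc x' v &
    {in CR R, forall y, anc y v -> depth y <= depth x}].
Proof.
move=> canon_R wCR wv w_nv w_nadj.
rewrite /Defs.step (negbTE w_nv) (negbTE w_nadj) (Cu_canon canon_R wCR) wv.
have [|x [-> /[!inE] /andP [xCR xv] x_max]] := @deepestP [set x in CR R | anc x v] w.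
  by rewrite inE wCR.
have x_nv : x != v by apply: contraNneq w_nadj => x_v; apply: adjG_CR canon_R wCR _ w_nv; rewrite -x_v.
have [x' [-> x'x x'v]] := childToP xv x_nv.
by exists x, x'; split => // y yCR yv; apply: x_max; rewrite inE yCR.
Qed.

Lemma step_desc R w : canon R -> w \in CR R -> anc v w -> w != v -> ~~ adjG w v ->
  exists x, [/\ step w v = moveTo w x ++ [:: par x], x \in CR R, x != r, anc v (par x) &
    anc x w /\ {in CR R, forall y, anc v y -> anc y w -> depth x <= depth y}].
Proof.
move=> canon_R wCR vw w_nv w_nadj.
have v_nCR : v \notin CR R by apply: contra w_nadj => vCR; apply: adjG_CR canon_R wCR vCR w_nv.
have w_nanc : anc w v = false by apply: contraNF w_nv => wv; rewrite (anc_antisym wv vw).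
rewrite /Defs.step (negbTE w_nv) (negbTE w_nadj) (Cu_canon canon_R wCR) w_nanc vw.
have [|x [-> /[!inE] /and3P [xCR vx xw] x_min]] :=
  @highestP [set x in CR R | anc v x && anc x w] w.
  by rewrite inE wCR vw anc_refl.
have v_nx : v != x by apply: contraNneq v_nCR => ->.
have [x_nr v_px] := anc_neq_par vx v_nx.
by exists x; split => //; split => // y yCR vy yw; apply: x_min; rewrite inE yCR vy.
Qed.

Definition progress R Q :=
  if v \in R then (v \in Q) && (k * #|Q| < #|R|) else k * #|R| < #|Q|.

Lemma deepest_child_progress R x x' : canon R -> x \in CR R -> child x' x -> anc x' v ->
  {in CR R, forall y, anc y v -> depth y <= depth x} ->
  exists2 Q, canon Q & x' \in CR Q /\ progress R Q.
Proof.
move=> canon_R xCR x'x x'v x_max.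
have sub_R := canon_subtree canon_R; have [_ R_anc _] := sub_R.
have xR := subsetP (CR_sub sub_R) _ xCR; have [xx' _] := child_anc x'x.
have below_nCR y : anc x' y -> anc y v -> y \notin CR R.
  move=> x'y yv; apply: contraTN (child_depth x'x) => yCR; rewrite -leqNgt.
  exact: leq_trans (depth_le x'y) (x_max y yCR yv).
have [vR|v_nR] := boolP (v \in R).
  have x'R : x' \in R := subtree_between sub_R vR (anc_trans (R_anc x xR) xx') x'v.
  have x'X : x' \in R :\: CR R by rewrite inE below_nCR ?anc_refl.
  exists (compo (R :\: CR R) x'); first exact: canonS canon_R x'X.
  split; first by apply: canon_enter canon_R x'X xCR _; rewrite /Defs.adj x'x.
  rewrite /progress vR (card_compo_CR sub_R x'X) andbT; apply: compo_down => // b x'b bv.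
  rewrite inE below_nCR //; apply: subtree_between sub_R vR _ bv.
  exact: anc_trans (R_anc x xR) (anc_trans xx' x'b).
(* the deepest ancestor z of v in R has a child outside R, so z = lR R lies in CR R *)
have x'_nR : x' \notin R.
  have [|z [_ /[!inE] /andP [zR zv] z_max]] := @deepestP [set a in R | anc a v] x.
    by rewrite inE xR (anc_trans xx' x'v).
  have z_nv : z != v by apply: contraNneq v_nR => <-.
  have [y [yz yv]] := exists_child_anc zv z_nv.
  have y_nR : y \notin R.
    by apply: contraTN (child_depth yz) => yR; rewrite -leqNgt z_max // inE yR.
  have zCR : z \in CR R by rewrite (lR_exit canon_R zR yz y_nR) (lR_CR sub_R).
  apply: contraTN (child_depth x'x) => x'R; rewrite -leqNgt.
  by apply: leq_trans (z_max x' _) (x_max z zCR zv); rewrite inE x'R.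
have xx'_adj : adj x x' by rewrite /Defs.adj x'x orbT.
by have [Q canon_Q [x'CQ card_Q]] := canon_exit canon_R xR x'_nR xx'_adj; exists Q => //; rewrite /progress (negbTE v_nR).
Qed.

Lemma highest_parent_progress R w x : canon R -> w \in CR R -> x \in CR R -> x != r ->
  anc v (par x) -> anc x w -> {in CR R, forall y, anc v y -> anc y w -> depth x <= depth y} ->
  exists2 Q, canon Q & par x \in CR Q /\ progress R Q.
Proof.
move=> canon_R wCR xCR x_nr v_px xw x_min.
have sub_R := canon_subtree canon_R; have [rtR R_anc _] := sub_R.
have xR := subsetP (CR_sub sub_R) _ xCR; have wR := subsetP (CR_sub sub_R) _ wCR.
have vx := anc_trans v_px (anc_par x).
have [vR|v_nR] := boolP (v \in R).
  have above_nCR b : anc v b -> anc b (par x) -> b \notin CR R.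
    move=> vb b_px; apply: contraTN (depth_lt (anc_par x) (par_neq x_nr)) => bCR.
    rewrite -leqNgt; apply: leq_trans (x_min b bCR vb _) (depth_le b_px).
    exact: anc_trans b_px (anc_trans (anc_par x) xw).
  have in_R b : anc v b -> anc b (par x) -> b \in R.
    by move=> vb b_px; apply: subtree_between sub_R xR (anc_trans (R_anc v vR) vb) (anc_of_par b_px).
  have pxX : par x \in R :\: CR R by rewrite inE above_nCR ?anc_refl // in_R ?anc_refl.
  exists (compo (R :\: CR R) (par x)); first exact: canonS canon_R pxX.
  split; first by apply: canon_enter canon_R pxX xCR _; rewrite /Defs.adj child_par ?orbT.
  rewrite /progress vR (card_compo_CR sub_R pxX) andbT; apply: compo_up => // b vb b_px.
  by rewrite inE above_nCR // in_R.
(* outside R, the highest vertex of CR R above w is rt R *)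
have vw := anc_trans vx xw.
have v_rt : anc v (rt R).
  have [//|rt_v] := anc_total vw (R_anc w wR).
  by rewrite (subtree_between sub_R wR rt_v vw) in v_nR.
have rt_x : rt R = x.
  by apply: anc_depth_eq (R_anc x xR) (x_min _ (rt_CR sub_R) v_rt (R_anc w wR)).
have px_nR : par x \notin R.
  apply: contra (par_neq x_nr) => pxR; apply/eqP/anc_antisym; first exact: anc_par.
  by rewrite -{1}rt_x; apply: R_anc.
have xpx_adj : adj x (par x) by rewrite /Defs.adj child_par.
by have [Q canon_Q [pxCQ card_Q]] := canon_exit canon_R xR px_nR xpx_adj; exists Q => //; rewrite /progress (negbTE v_nR).
Qed.

Lemma size_moveTo (w x y : V) : size (moveTo w x ++ [:: y]) <= 2.
Proof. by rewrite size_cat /moveTo; case: (x == w). Qed.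

Lemma step_progress R w : canon R -> w \in CR R -> anc w v \/ anc v w -> w != v -> ~~ adjG w v ->
  exists2 Q, canon Q & let w' := last w (step w v) in
    [/\ size (step w v) <= 2, w' \in CR Q, anc w' v \/ anc v w' & progress R Q].
Proof.
move=> canon_R wCR [wv|vw] w_nv w_nadj.
  have [x [x' [-> xCR x'x x'v x_max]]] := step_anc canon_R wCR wv w_nv w_nadj.
  have [Q canon_Q [x'CQ prog]] := deepest_child_progress canon_R xCR x'x x'v x_max.
  by exists Q => //; rewrite last_cat /= size_moveTo; split => //; left.
have [x [-> xCR x_nr v_px [xw x_min]]] := step_desc canon_R wCR vw w_nv w_nadj.
have [Q canon_Q [pxCQ prog]] := highest_parent_progress canon_R wCR xCR x_nr v_px xw x_min.
by exists Q => //; rewrite last_cat /= size_moveTo; split => //; right.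
Qed.

Hypothesis k_ge4 : 4 <= k.

Definition reaches w N := exists t, last w (walk t w v) = v /\ size (walk t w v) <= N.

Lemma reaches_mono w N M : N <= M -> reaches w N -> reaches w M.
Proof. by move=> le_NM [t [end_t size_t]]; exists t; split => //; apply: leq_trans le_NM. Qed.

Lemma reaches_step w N : reaches (last w (step w v)) N -> reaches w (size (step w v) + N).
Proof.
case=> t [end_t size_t]; exists t.+1.
by rewrite /= last_cat end_t size_cat leq_add2l.
Qed.

Lemma reaches_adjG w : w != v -> adjG w v -> reaches w 1.
Proof.
move=> w_nv wv; have step_w : step w v = [:: v] by rewrite /Defs.step (negbTE w_nv) wv.
by have := @reaches_step w 0; rewrite step_w; apply; exists 0.
Qed.

Lemma reaches_progress R w N : canon R -> w \in CR R -> anc w v \/ anc v w ->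
  (forall Q w', canon Q -> w' \in CR Q -> anc w' v \/ anc v w' -> progress R Q -> reaches w' N) ->
  reaches w (N + 2).
Proof.
move=> canon_R wCR wv next.
have [->|w_nv] := eqVneq w v; first by exists 0.
have [w_adj|w_nadj] := boolP (adjG w v); first by apply: reaches_mono (reaches_adjG w_nv w_adj); lia.
have [Q canon_Q [size_w w'CQ w'v prog]] := step_progress canon_R wCR wv w_nv w_nadj.
apply: reaches_mono (reaches_step (next _ _ canon_Q w'CQ w'v prog)).
by rewrite addnC leq_add2l.
Qed.

Lemma reaches_inside j R w : canon R -> w \in CR R -> v \in R -> anc w v \/ anc v w ->
  #|R| < 4 ^ j -> reaches w (2 * j).
Proof.
elim: j R w => [|j IH] R w canon_R wCR vR wv card_R.
  by move: card_R; rewrite ltnS leqn0 cards_eq0 => /eqP R0; rewrite R0 inE in vR.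
rewrite mulnSr; apply: reaches_progress canon_R wCR wv _ => Q w' canon_Q w'CQ w'v.
rewrite /progress vR => /andP [vQ card_Q]; apply: IH canon_Q w'CQ vQ w'v _.
by move: card_R; rewrite expnS; nia.
Qed.

Lemma reaches_outside J j R w : #|V| < 4 ^ J -> canon R -> w \in CR R -> v \notin R ->
  anc w v \/ anc v w -> #|V| < 4 ^ j * #|R| -> reaches w (2 * j + 2 * J).
Proof.
move=> card_V; elim: j R w => [|j IH] R w canon_R wCR v_nR wv card_R.
  by move: card_R; rewrite mul1n ltnNge max_card.
rewrite mulnSr -addnA [2 + _]addnC addnA.
apply: reaches_progress canon_R wCR wv _ => Q w' canon_Q w'CQ w'v.
rewrite /progress (negbTE v_nR) => card_Q.
have [vQ|v_nQ] := boolP (v \in Q).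
  apply: reaches_mono (reaches_inside canon_Q w'CQ vQ w'v _); first exact: leq_addl.
  exact: leq_ltn_trans (max_card _) card_V.
apply: IH canon_Q w'CQ v_nQ w'v _; apply: (leq_trans card_R).
by rewrite expnSr -mulnA leq_pmul2l ?expn_gt0 //; nia.
Qed.

Lemma reaches_log u : anc u v \/ anc v u -> reaches u (4 * trunc_log 2 #|V| + 4).
Proof.
move=> uv; set J := (trunc_log 2 #|V|).+1.
have card_V : #|V| < 4 ^ J.
  by apply: leq_trans (trunc_log_ltn _ (isT : 1 < 2)) _; rewrite leq_exp2r.
have [R [canon_R uCR]] := canon_CR_cover u.
have uR := subsetP (CR_sub (canon_subtree canon_R)) _ uCR.
have [vR|v_nR] := boolP (v \in R).
  apply: reaches_mono (reaches_inside (j := J) canon_R uCR vR uv _); first by rewrite /J; lia.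
  exact: leq_ltn_trans (max_card _) card_V.
apply: reaches_mono (reaches_outside (j := J) card_V canon_R uCR v_nR uv _); first by rewrite /J; lia.
apply: leq_trans card_V _; rewrite -[leqLHS]muln1 leq_mul2l.
by apply/orP; right; apply/card_gt0P; exists u.
Qed.

End Tree.

Theorem lemma14 :
  forall k : nat, 4 <= k ->
  exists c : nat,
  forall (V : finType) (r : V) (par : V -> V) (c1 : V -> option V),
    rooted_tree r par -> leftmost_spec r par c1 ->
    forall u v : V, anc par u v \/ anc par v u ->
    exists t : nat,
      last u (walk r par c1 k t u v) = v /\
      size (walk r par c1 k t u v) <= c * trunc_log 2 #|V| + c.
Proof.
move=> k k_ge4; exists 4; move=> V r par c1 tree_par leftmost u v uv.
have c1_child w c : c1 w = Some c -> child r par c w.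
  by move=> c1w; case: (leftmost w) => _ /(_ c c1w) [].
have k_gt0 : 0 < k by apply: leq_trans k_ge4.
by case: (reaches_log tree_par c1_child k_gt0 k_ge4 uv) => t walk_t; exists t.
Qed.
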